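(* Let $A$ and $B$ be C$^*$-algebras, where $A$ is unital with unit $1$, and let $T:A\to B$ be a bounded linear map which is a $^*$-homomorphism at a unitary element $u\in A$. Then $T(1)$ is a projection, $T(1)T(a)=T(a)T(1)$ for every $a\in A$, and $T(1)T$ (the map $a\mapsto T(1)T(a)$) is a Jordan homomorphism. Furthermore, if in addition $T(1)T(x)=T(x)$ for every $x\in A$ (which is the case when $B$ is unital and $T(u)$ is a unitary in $B$), then $T$ is a Jordan homomorphism.
   Context: A map $T:A\to B$ between C$^*$-algebras is a $^*$-homomorphism at $z\in A$ if for all $a,b\in A$ with $ab^*=z$ one has $T(ab^* )=T(a)T(b)^*=T(z)$, and for all $c,d\in A$ with $c^*d=z$ one has $T(c^*d)=T(c)^*T(d)=T(z)$. A Jordan homomorphism is a linear map $S$ with $S(a\circ b)=S(a)\circ S(b)$ for all $a,b$, where $a\circ b=\frac12(ab+ba)$. *)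

From HB Require Import structures.
From mathcomp Require Import all_boot all_order all_algebra.
From mathcomp Require Import reals complex.
Set Implicit Arguments. Unset Strict Implicit. Unset Printing Implicit Defensive.
Import Order.TTheory GRing.Theory Num.Theory.
Local Open Scope ring_scope.

Definition cabs (R : realType) (k : R[i]) : R := Normc.normc k.

Record cstar_axioms (R : realType) (V : lmodType R[i])
    (mul : V -> V -> V) (star : V -> V) (nrm : V -> R) : Prop := {
  cs_mulA : forall a b c, mul a (mul b c) = mul (mul a b) c;
  cs_mulDl : forall a b c, mul (a + b) c = mul a c + mul b c;
  cs_mulDr : forall a b c, mul a (b + c) = mul a b + mul a c;
  cs_mulZl : forall (k : R[i]) a b, mul (k *: a) b = k *: mul a b;
  cs_mulZr : forall (k : R[i]) a b, mul a (k *: b) = k *: mul a b;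
  cs_starK : forall a, star (star a) = a;
  cs_starD : forall a b, star (a + b) = star a + star b;
  cs_starZ : forall (k : R[i]) a, star (k *: a) = conjc k *: star a;
  cs_starM : forall a b, star (mul a b) = mul (star b) (star a);
  cs_nrm_eq0 : forall a, nrm a = 0 -> a = 0;
  cs_nrm_ge0 : forall a, 0 <= nrm a;
  cs_nrmD : forall a b, nrm (a + b) <= nrm a + nrm b;
  cs_nrmZ : forall (k : R[i]) a, nrm (k *: a) = cabs k * nrm a;
  cs_nrmM : forall a b, nrm (mul a b) <= nrm a * nrm b;
  cs_cstar : forall a, nrm (mul (star a) a) = nrm a ^+ 2;
  cs_complete : forall u : nat -> V,
    (forall e : R, 0 < e -> exists N : nat, forall m n : nat,
        (N <= m)%N -> (N <= n)%N -> nrm (u m - u n) < e) ->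
    exists l : V, forall e : R, 0 < e -> exists N : nat, forall n : nat,
        (N <= n)%N -> nrm (u n - l) < e
}.

Record cstarAlg (R : realType) := CStarAlg {
  cs_carrier :> lmodType R[i];
  cs_mul : cs_carrier -> cs_carrier -> cs_carrier;
  cs_star : cs_carrier -> cs_carrier;
  cs_nrm : cs_carrier -> R;
  cs_ax : cstar_axioms cs_mul cs_star cs_nrm
}.

Section Defs.
Variable R : realType.

Definition cs_jprod (A : cstarAlg R) (a b : A) : A :=
  (2%:R^-1 : R[i]) *: (cs_mul a b + cs_mul b a).

Definition cs_linear (A B : cstarAlg R) (T : A -> B) : Prop :=
  (forall a b, T (a + b) = T a + T b) /\ (forall (k : R[i]) a, T (k *: a) = k *: T a).

Definition cs_bounded (A B : cstarAlg R) (T : A -> B) : Prop :=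
  exists M : R, forall a, cs_nrm (T a) <= M * cs_nrm a.

Definition cs_unit_of (A : cstarAlg R) (e : A) : Prop :=
  forall a, cs_mul e a = a /\ cs_mul a e = a.

Definition cs_unitary (A : cstarAlg R) (e u : A) : Prop :=
  cs_mul (cs_star u) u = e /\ cs_mul u (cs_star u) = e.

Definition cs_projection (A : cstarAlg R) (p : A) : Prop :=
  cs_mul p p = p /\ cs_star p = p.

Definition cs_star_hom_at (A B : cstarAlg R) (T : A -> B) (z : A) : Prop :=
  (forall a b : A, cs_mul a (cs_star b) = z ->
     T (cs_mul a (cs_star b)) = cs_mul (T a) (cs_star (T b)) /\
     cs_mul (T a) (cs_star (T b)) = T z) /\
  (forall c d : A, cs_mul (cs_star c) d = z ->
     T (cs_mul (cs_star c) d) = cs_mul (cs_star (T c)) (T d) /\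
     cs_mul (cs_star (T c)) (T d) = T z).

Definition cs_jordan_hom (A B : cstarAlg R) (S : A -> B) : Prop :=
  cs_linear S /\ forall a b, S (cs_jprod a b) = cs_jprod (S a) (S b).

End Defs.

(* If g h = 1 then (u g) (h^†)^† = u and (g^†)^† (h u) = u, so T being a
   *-homomorphism at u gives T(u g) T(h^†)^† = T(u) = T(g^†)^† T(h u).  Taking
   g = 1 + s y with its Neumann-series inverse h and expanding in s (boundedness
   of T makes the remainders O(s)) yields identities linking T(u y), T(y) and
   T(y^2).  At y = u^† they show that t = T(u) is a partial isometry with
   t t^† = t^† t = e := T(1) and that e is a projection; in general they show
   that e commutes with the range of T and that a |-> e T(a) preserves
   squares, hence Jordan products. *)

From mathcomp Require Import all_boot all_order all_algebra.
From mathcomp Require Import reals complex.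
From mathcomp Require Import lra.
Set Implicit Arguments. Unset Strict Implicit. Unset Printing Implicit Defensive.
Import Order.TTheory GRing.Theory Num.Theory.
Local Open Scope complex_scope.
Local Open Scope ring_scope.

Local Notation "x ** y" := (cs_mul x y) (at level 40, left associativity).
(* [^*] is already taken by complex conjugation. *)
Local Notation "x ^†" := (cs_star x) (at level 2, left associativity, format "x ^†").

Section CStarAlgebra.
Variables (R : realType) (A : cstarAlg R).
Implicit Types (a b c : A) (k : R[i]).

Lemma mulcA a b c : a ** (b ** c) = a ** b ** c. Proof. exact: (cs_mulA (cs_ax A)). Qed.
Lemma mulcDl a b c : (a + b) ** c = a ** c + b ** c. Proof. exact: (cs_mulDl (cs_ax A)). Qed.
Lemma mulcDr a b c : a ** (b + c) = a ** b + a ** c. Proof. exact: (cs_mulDr (cs_ax A)). Qed.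
Lemma mulcZl k a b : (k *: a) ** b = k *: (a ** b). Proof. exact: (cs_mulZl (cs_ax A)). Qed.
Lemma mulcZr k a b : a ** (k *: b) = k *: (a ** b). Proof. exact: (cs_mulZr (cs_ax A)). Qed.
Lemma starcK a : a^†^† = a. Proof. exact: (cs_starK (cs_ax A)). Qed.
Lemma starcD a b : (a + b)^† = a^† + b^†. Proof. exact: (cs_starD (cs_ax A)). Qed.
Lemma starcZ k a : (k *: a)^† = conjc k *: a^†. Proof. exact: (cs_starZ (cs_ax A)). Qed.
Lemma starcM a b : (a ** b)^† = b^† ** a^†. Proof. exact: (cs_starM (cs_ax A)). Qed.
Lemma nrm_eq0 a : cs_nrm a = 0 -> a = 0. Proof. exact: (cs_nrm_eq0 (cs_ax A)). Qed.
Lemma nrm_ge0 a : 0 <= cs_nrm a. Proof. exact: (cs_nrm_ge0 (cs_ax A)). Qed.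
Lemma nrmD a b : cs_nrm (a + b) <= cs_nrm a + cs_nrm b. Proof. exact: (cs_nrmD (cs_ax A)). Qed.
Lemma nrmZ k a : cs_nrm (k *: a) = cabs k * cs_nrm a. Proof. exact: (cs_nrmZ (cs_ax A)). Qed.
Lemma nrmM a b : cs_nrm (a ** b) <= cs_nrm a * cs_nrm b. Proof. exact: (cs_nrmM (cs_ax A)). Qed.
Lemma nrm_cstar a : cs_nrm (a^† ** a) = cs_nrm a ^+ 2. Proof. exact: (cs_cstar (cs_ax A)). Qed.

Lemma mulc0 a : a ** 0 = 0.
Proof. by apply: (addrI (a ** 0)); rewrite -mulcDr !addr0. Qed.
Lemma mul0c a : 0 ** a = 0.
Proof. by apply: (addrI (0 ** a)); rewrite -mulcDl !addr0. Qed.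
Lemma mulcN a b : a ** (- b) = - (a ** b).
Proof. by apply/eqP; rewrite -subr_eq0 opprK -mulcDr addNr mulc0. Qed.
Lemma mulNc a b : (- a) ** b = - (a ** b).
Proof. by apply/eqP; rewrite -subr_eq0 opprK -mulcDl addNr mul0c. Qed.
Lemma mulcBr a b c : a ** (b - c) = a ** b - a ** c. Proof. by rewrite mulcDr mulcN. Qed.
Lemma mulcBl a b c : (a - b) ** c = a ** c - b ** c. Proof. by rewrite mulcDl mulNc. Qed.
Lemma starc0 : (0 : A)^† = 0.
Proof. by apply: (addrI 0^†); rewrite -starcD !addr0. Qed.
Lemma starcN a : (- a)^† = - a^†.
Proof. by apply/eqP; rewrite -subr_eq0 opprK -starcD addNr starc0. Qed.
Lemma starcB a b : (a - b)^† = a^† - b^†. Proof. by rewrite starcD starcN. Qed.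

Lemma cabsN1 : cabs (-1 : R[i]) = 1.
Proof. by rewrite /cabs normcN Normc.normc1. Qed.
Lemma cabs_real (s : R) : cabs s%:C = `|s|.
Proof. by rewrite /cabs /= expr0n /= addr0 sqrtr_sqr. Qed.

Lemma nrm0 : cs_nrm (0 : A) = 0.
Proof. by rewrite -(scale0r (0 : A)) nrmZ cabs_real normr0 mul0r. Qed.
Lemma nrmN a : cs_nrm (- a) = cs_nrm a.
Proof. by rewrite -scaleN1r nrmZ cabsN1 mul1r. Qed.
Lemma nrmB a b : cs_nrm (a - b) <= cs_nrm a + cs_nrm b.
Proof. by rewrite -(nrmN b); apply: nrmD. Qed.
Lemma nrm_distC a b : cs_nrm (a - b) = cs_nrm (b - a).
Proof. by rewrite -nrmN opprB. Qed.

Lemma nrm_star a : cs_nrm a^† = cs_nrm a.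
Proof.
suff le_star (x : A) : cs_nrm x <= cs_nrm x^†.
  by apply/eqP; rewrite eq_le le_star -{2}(starcK a) le_star.
have [->|x_neq0] := eqVneq (cs_nrm x) 0; first exact: nrm_ge0.
have x_gt0 : 0 < cs_nrm x by rewrite lt0r x_neq0 nrm_ge0.
by rewrite -(ler_pM2r x_gt0) -expr2 -nrm_cstar nrmM.
Qed.

Lemma star_mul_eq0 a : a ** a^† = 0 -> a = 0.
Proof.
move=> aa0; rewrite -(starcK a); have /nrm_eq0-> : cs_nrm a^† = 0.
  by apply/eqP; rewrite -sqrf_eq0 -nrm_cstar starcK aa0 nrm0.
exact: starc0.
Qed.

Lemma nrm_le_eps_eq0 a : (forall e : R, 0 < e -> cs_nrm a <= e) -> a = 0.
Proof.
move=> small; apply: nrm_eq0; apply/eqP; rewrite eq_le nrm_ge0 andbT.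
by apply/ler_addgt0Pr => e e_gt0; rewrite add0r small.
Qed.

Lemma nrm_le_lin_eq0 a (d C : R) : 0 < d ->
  (forall s : R, 0 < s -> s <= d -> cs_nrm a <= s * C) -> a = 0.
Proof.
move=> d_gt0 small; apply: nrm_le_eps_eq0 => e e_gt0.
have C1_gt0 : 0 < `|C| + 1 by rewrite ltr_wpDl.
set s := Order.min d (e / (`|C| + 1)).
have s_gt0 : 0 < s by rewrite lt_min d_gt0 divr_gt0.
have s_le_d : s <= d by rewrite ge_min lexx.
apply: le_trans (small s s_gt0 s_le_d) _.
apply: le_trans (_ : s * (`|C| + 1) <= e).
  by apply: ler_wpM2l; [exact: ltW | apply: ler_wpDr => //; exact: ler_norm].
by rewrite -ler_pdivlMr // ge_min lexx orbT.
Qed.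

Lemma star_unit (one : A) : cs_unit_of one -> one^† = one.
Proof.
by move=> U; rewrite -[one^†](U _).2 -{2}[one]starcK -starcM (U _).2 starcK.
Qed.

Lemma nrm_unit_le1 (one : A) : cs_unit_of one -> cs_nrm one <= 1.
Proof.
move=> U; have [->|one_neq0] := eqVneq (cs_nrm one) 0; first exact: ler01.
have one_gt0 : 0 < cs_nrm one by rewrite lt0r one_neq0 nrm_ge0.
by rewrite -(ler_pM2r one_gt0) mul1r -expr2 -nrm_cstar star_unit // (U one).1.
Qed.

End CStarAlgebra.

Lemma cs_bounded_ge0 (R : realType) (A B : cstarAlg R) (f : A -> B) : cs_bounded f ->
  exists2 M : R, 0 <= M & forall a, cs_nrm (f a) <= M * cs_nrm a.
Proof.
case=> M f_bnd; exists `|M| => // a; apply: le_trans (f_bnd a) _.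
by rewrite ler_wpM2r ?nrm_ge0 ?ler_norm.
Qed.

Definition star_conj (R : realType) (A B : cstarAlg R) (f : A -> B) (a : A) : B :=
  (f a^†)^†.

Lemma star_conjE (R : realType) (A B : cstarAlg R) (f : A -> B) (a : A) :
  star_conj f a^† = (f a)^†.
Proof. by rewrite /star_conj starcK. Qed.

Section LinearMaps.
Variables (R : realType) (A B C : cstarAlg R).

Lemma cs_linear_comp (f : A -> B) (g : B -> C) :
  cs_linear f -> cs_linear g -> cs_linear (g \o f).
Proof. by case=> fD fZ [gD gZ]; split=> *; rewrite /= (fD, fZ) (gD, gZ). Qed.

Lemma cs_bounded_comp (f : A -> B) (g : B -> C) :
  cs_bounded f -> cs_bounded g -> cs_bounded (g \o f).
Proof.
move=> bf bg; have [M M_ge0 f_bnd] := cs_bounded_ge0 bf.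
have [M' M'_ge0 g_bnd] := cs_bounded_ge0 bg.
exists (M' * M) => a; rewrite -mulrA; apply: le_trans (g_bnd _) _.
by rewrite ler_wpM2l.
Qed.

Lemma cs_linearB_fun (f g : A -> B) :
  cs_linear f -> cs_linear g -> cs_linear (f \- g).
Proof.
case=> fD fZ [gD gZ]; split=> [a b|k a] /=; first by rewrite fD gD addrACA opprD.
by rewrite fZ gZ scalerBr.
Qed.

Lemma cs_boundedB_fun (f g : A -> B) :
  cs_bounded f -> cs_bounded g -> cs_bounded (f \- g).
Proof.
move=> [M f_bnd] [M' g_bnd]; exists (M + M') => a /=.
by apply: le_trans (nrmB _ _) _; rewrite mulrDl lerD.
Qed.

Lemma cs_linear_star_conj (f : A -> B) : cs_linear f -> cs_linear (star_conj f).
Proof.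
case=> fD fZ; split=> [a b|k a]; rewrite /star_conj; first by rewrite starcD fD starcD.
by rewrite starcZ fZ starcZ conjcK.
Qed.

Lemma cs_bounded_star_conj (f : A -> B) : cs_bounded f -> cs_bounded (star_conj f).
Proof. by case=> M f_bnd; exists M => a; rewrite /star_conj nrm_star -(nrm_star a). Qed.

Lemma cs_linear_mull (c : A) : cs_linear (cs_mul c).
Proof. by split=> *; rewrite (mulcDr, mulcZr). Qed.

Lemma cs_bounded_mull (c : A) : cs_bounded (cs_mul c).
Proof. by exists (cs_nrm c); exact: nrmM. Qed.

Lemma cs_linear_mulr (c : A) : cs_linear (fun a => a ** c).
Proof. by split=> *; rewrite (mulcDl, mulcZl). Qed.

Lemma cs_bounded_mulr (c : A) : cs_bounded (fun a => a ** c).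
Proof. by exists (cs_nrm c) => a; rewrite mulrC nrmM. Qed.

End LinearMaps.

Lemma half_exprn_lt (R : realType) (e : R) :
  0 < e -> exists N, forall n, (N <= n)%N -> (2^-1 : R) ^+ n < e.
Proof.
move=> e_gt0; exists (Num.Def.archi_bound e^-1) => n le_Nn.
have e_lt_N : e^-1 < (Num.Def.archi_bound e^-1)%:R.
  by apply: archi_boundP; rewrite invr_ge0 ltW.
have N_lt_2n : (Num.Def.archi_bound e^-1)%:R < (2 ^ n)%:R :> R.
  by rewrite ltr_nat (leq_ltn_trans le_Nn) // ltn_expl.
rewrite exprVn -natrX invf_plt ?posrE ?ltr0n ?expn_gt0 //.
exact: lt_trans e_lt_N N_lt_2n.
Qed.

Section Neumann.
Variables (R : realType) (A : cstarAlg R) (one z : A).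
Hypotheses (one_unit : cs_unit_of one) (z_small : cs_nrm z <= 2^-1).
Local Notation q := (2^-1 : R).

Fixpoint geom_pow n := if n is m.+1 then z ** geom_pow m else one.
Fixpoint geom_sum n := if n is m.+1 then geom_sum m + geom_pow m else 0.

Let q_ge0 n : 0 <= q ^+ n. Proof. by rewrite exprn_ge0 // invr_ge0 ler0n. Qed.

Lemma nrm_geom_pow n : cs_nrm (geom_pow n) <= q ^+ n.
Proof.
elim: n => [|n IH] /=; first by rewrite expr0 nrm_unit_le1.
by rewrite exprS; apply: le_trans (nrmM _ _) _; apply: ler_pM => //; exact: nrm_ge0.
Qed.

Lemma geom_sum_telescope n : (one - z) ** geom_sum n = one - geom_pow n.
Proof.
elim: n => [|n IH] /=; first by rewrite mulc0 subrr.
by rewrite mulcDr IH mulcBl (one_unit _).1 addrA subrK.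
Qed.

Lemma nrm_geom_sum_sub n k :
  cs_nrm (geom_sum (n + k) - geom_sum n) <= 2 * q ^+ n - 2 * q ^+ (n + k).
Proof.
elim: k => [|k IH]; first by rewrite addn0 !subrr nrm0.
rewrite addnS /= addrAC; apply: le_trans (nrmD _ _) _.
by have := nrm_geom_pow (n + k); rewrite exprS; lra.
Qed.

Lemma geom_sum_cauchy (e : R) : 0 < e -> exists N, forall m n,
  (N <= m)%N -> (N <= n)%N -> cs_nrm (geom_sum m - geom_sum n) < e.
Proof.
move=> e_gt0; have [N qN_small] := half_exprn_lt (divr_gt0 e_gt0 (ltr0n R 2)).
exists N => m n; wlog le_nm : m n / (n <= m)%N.
  move=> sym le_Nm le_Nn; case/orP: (leq_total n m) => le; first exact: sym.
  by rewrite nrm_distC; apply: sym.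
move=> _ le_Nn.
rewrite -(subnKC le_nm); apply: le_lt_trans (nrm_geom_sum_sub _ _) _.
by have := qN_small n le_Nn; have := q_ge0 (n + (m - n)); lra.
Qed.

Lemma one_sub_right_inverse : exists l, (one - z) ** l = one /\ cs_nrm l <= 2.
Proof.
have [l geom_sum_to_l] := cs_complete (cs_ax A) geom_sum_cauchy.
exists l; split.
  apply/eqP; rewrite -subr_eq0; apply/eqP; apply: nrm_le_eps_eq0 => e e_gt0.
  have e3_gt0 : 0 < e / 3 by rewrite divr_gt0.
  have [N1 close] := geom_sum_to_l _ e3_gt0; have [N2 small] := half_exprn_lt e3_gt0.
  set n := maxn N1 N2.
  have -> : (one - z) ** l - one = (one - z) ** (l - geom_sum n) - geom_pow n.
    by rewrite mulcBr geom_sum_telescope opprB [geom_pow n - one]addrC addrA addrK.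
  have nrm_one_sub_z : cs_nrm (one - z) <= 2.
    by have := nrmB one z; have := nrm_unit_le1 one_unit; have := z_small; lra.
  have prod_small : cs_nrm ((one - z) ** (l - geom_sum n)) <= 2 * (e / 3).
    apply: le_trans (nrmM _ _) _; apply: ler_pM => //; try exact: nrm_ge0.
    by rewrite nrm_distC; apply/ltW/close/leq_maxl.
  have pow_small : cs_nrm (geom_pow n) <= e / 3.
    exact: le_trans (nrm_geom_pow n) (ltW (small n (leq_maxr _ _))).
  by apply: le_trans (nrmB _ _) _; lra.
apply/ler_addgt0Pr => e e_gt0; have [N close] := geom_sum_to_l e e_gt0.
have -> : l = geom_sum N - (geom_sum N - l) by rewrite opprB addrC subrK.
apply: le_trans (nrmB _ _) (lerD _ (ltW (close N (leqnn N)))).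
by have := nrm_geom_sum_sub 0 N; rewrite subr0 add0n expr0 mulr1; have := q_ge0 N; lra.
Qed.

End Neumann.

Section Resolvent.
Variables (R : realType) (A B : cstarAlg R) (one y : A).
Hypothesis one_unit : cs_unit_of one.

(* For [0 < s <= res_radius], [|s y| <= 1/2], so [1 + s y] has a
   Neumann-series right inverse of norm at most 2. *)
Definition res_radius : R := 2^-1 / (cs_nrm y + 1).

Definition resolvent (s : R) (N : A) : Prop :=
  [/\ 0 < s, s <= res_radius, (one + s%:C *: y) ** N = one & cs_nrm N <= 2].

Definition vanishes_on_resolvents (phi : A -> B) : Prop :=
  forall s N, resolvent s N -> phi N = 0.

Let nrm_y1_gt0 : 0 < cs_nrm y + 1.
Proof. by apply: ltr_wpDl; [exact: nrm_ge0 | exact: ltr01]. Qed.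

Lemma res_radius_gt0 : 0 < res_radius.
Proof. by apply: divr_gt0 nrm_y1_gt0; rewrite invr_gt0. Qed.

Lemma resolvent_exists s : 0 < s -> s <= res_radius -> exists N, resolvent s N.
Proof.
move=> s_gt0 s_le.
have sy_small : cs_nrm (- (s%:C *: y)) <= 2^-1.
  rewrite nrmN nrmZ cabs_real gtr0_norm //.
  have : s * (cs_nrm y + 1) <= 2^-1 by rewrite -(ler_pdivlMr _ _ nrm_y1_gt0).
  by have := s_gt0; lra.
have [N [inv N_le2]] := one_sub_right_inverse one_unit sy_small.
by exists N; split=> //; rewrite -[s%:C *: y]opprK.
Qed.

Lemma resolvent_expand s N : resolvent s N -> one = N + s%:C *: (y ** N).
Proof. by case=> _ _ inv _; rewrite -{1}inv mulcDl (one_unit N).1 mulcZl. Qed.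

Lemma vanishes_at_one (phi : A -> B) : cs_linear phi -> cs_bounded phi ->
  vanishes_on_resolvents phi ->
  phi one = 0 /\ vanishes_on_resolvents (phi \o cs_mul y).
Proof.
move=> [phiD phiZ] phi_bnd phi0; have [M M_ge0 bnd] := cs_bounded_ge0 phi_bnd.
(* [N = 1 - s y N], so [phi 1 = s phi (y N)] is [O(s)]. *)
have phi_one s N : resolvent s N -> phi one = s%:C *: phi (y ** N).
  by move=> res; rewrite {1}(resolvent_expand res) phiD phiZ (phi0 _ _ res) add0r.
have phi_one0 : phi one = 0.
  apply: (nrm_le_lin_eq0 res_radius_gt0 (C := M * (cs_nrm y * 2))) => s s_gt0 s_le.
  have [N res] := resolvent_exists s_gt0 s_le.
  rewrite (phi_one s N res) nrmZ cabs_real gtr0_norm // ler_pM2l //.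
  apply: le_trans (bnd _) _; rewrite ler_wpM2l //.
  apply: le_trans (nrmM _ _) _; rewrite ler_wpM2l ?nrm_ge0 //.
  by case: res.
split=> // s N res; have := phi_one s N res; rewrite phi_one0 => /esym/eqP.
rewrite scaler_eq0 => /orP[|/eqP //].
by case: res => s_gt0 _ _ _; rewrite fmorph_eq0 gt_eqF.
Qed.

Lemma vanishes_at_one_y (phi : A -> B) : cs_linear phi -> cs_bounded phi ->
  vanishes_on_resolvents phi -> phi one = 0 /\ phi y = 0.
Proof.
move=> phi_lin phi_bnd phi0; have [-> phiy0] := vanishes_at_one phi_lin phi_bnd phi0.
split=> //; rewrite -[y](one_unit y).2.
apply: (vanishes_at_one _ _ phiy0).1.
  exact: cs_linear_comp (cs_linear_mull y) phi_lin.
exact: cs_bounded_comp (cs_bounded_mull y) phi_bnd.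
Qed.

End Resolvent.

Section InversePairs.
Variables (R : realType) (A B : cstarAlg R) (one : A) (P Q : A -> B) (c : B).
Hypotheses (one_unit : cs_unit_of one) (P_lin : cs_linear P).
Hypotheses (Q_lin : cs_linear Q) (Q_bnd : cs_bounded Q).
Hypothesis PQ_inverse : forall g h, g ** h = one -> P g ** Q h = c.

(* The first two orders in [s] of [P (1 + s y) Q ((1 + s y)^-1) = c]. *)
Lemma inverse_pair_identities y :
  P y ** Q one = P one ** Q y /\ P y ** Q y = P one ** Q (y ** y).
Proof.
pose phi := (cs_mul (P y) \o Q) \- (cs_mul (P one) \o Q \o cs_mul y).
have phi_lin : cs_linear phi.
  apply: cs_linearB_fun; first exact: cs_linear_comp Q_lin (cs_linear_mull _).
  exact: cs_linear_comp (cs_linear_mull y) (cs_linear_comp Q_lin (cs_linear_mull _)).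
have phi_bnd : cs_bounded phi.
  apply: cs_boundedB_fun; first exact: cs_bounded_comp Q_bnd (cs_bounded_mull _).
  exact: cs_bounded_comp (cs_bounded_mull y) (cs_bounded_comp Q_bnd (cs_bounded_mull _)).
have phi0 : vanishes_on_resolvents one y phi.
  move=> s N res; have [s_gt0 _ inv _] := res.
  have := PQ_inverse inv; rewrite -(PQ_inverse (one_unit one).1).
  rewrite [X in _ = _ ** Q X](resolvent_expand one_unit res) P_lin.1 P_lin.2 Q_lin.1 Q_lin.2.
  rewrite mulcDl mulcDr mulcZl mulcZr => /addrI /eqP; rewrite -subr_eq0 -scalerBr.
  by rewrite scaler_eq0 fmorph_eq0 gt_eqF //= => /eqP.
have [/eqP phi_one /eqP phi_y] := vanishes_at_one_y one_unit phi_lin phi_bnd phi0.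
move: phi_one phi_y; rewrite !subr_eq0 /= (one_unit y).2.
by move=> /eqP-> /eqP->.
Qed.

End InversePairs.

Section PartialIsometries.
Variables (R : realType) (B : cstarAlg R).
Implicit Types e t z : B.

Lemma partial_isometry_of_idem z :
  z ** z^† ** (z ** z^†) = z ** z^† -> z ** z^† ** z = z.
Proof.
move=> idem; have idem' : z ** z^† ** z ** z^† = z ** z^† by rewrite -mulcA.
set w := z ** z^† ** z - z.
have w_star : w^† = z^† ** z ** z^† - z^† by rewrite /w starcB !starcM starcK !mulcA.
have : w ** w^† = 0 by rewrite w_star /w !mulcBr !mulcBl !mulcA !idem' !subrr.
by move/star_mul_eq0/eqP; rewrite subr_eq0 => /eqP.
Qed.

Lemma projection_of_partial_isometries e t :
  t ** e^† = t -> e^† ** t = t -> e ** e^† = t ** t^† -> t^† ** t = e^† ** e ->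
  [/\ e ** e = e, e^† = e, e ** t = t, t ** t^† = e & t^† ** t = e].
Proof.
move=> te t_eq et_eq tt_eq.
have p_idem : t ** t^† ** (t ** t^†) = t ** t^†.
  have -> : t ** t^† ** (t ** t^†) = t ** e^† ** (t ** e^†)^†.
    by rewrite starcM starcK !mulcA -[t ** t^† ** t]mulcA tt_eq !mulcA.
  by rewrite te.
have q_idem : t^† ** t ** (t^† ** t) = t^† ** t.
  have -> : t^† ** t ** (t^† ** t) = (e^† ** t)^† ** (e^† ** t).
    by rewrite starcM starcK !mulcA -[t^† ** t ** t^†]mulcA -et_eq !mulcA.
  by rewrite t_eq.
have t_pi := partial_isometry_of_idem p_idem.
have e_pi : e ** e^† ** e = e by apply: partial_isometry_of_idem; rewrite et_eq.
have e_star_pi : e^† ** e ** e^† = e^†.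
  by have := @partial_isometry_of_idem e^†; rewrite starcK; apply; rewrite -tt_eq.
have normal : e ** e^† = e^† ** e.
  rewrite et_eq; have -> : t ** t^† = e^† ** t ** (e^† ** t)^† by rewrite t_eq.
  by rewrite starcM starcK !mulcA -[e^† ** t ** t^†]mulcA -et_eq !mulcA e_star_pi.
have et : e ** t = t by rewrite -{1}t_eq mulcA et_eq t_pi.
have e_sa : e^† = e.
  apply/eqP; rewrite eq_sym -subr_eq0; apply/eqP.
  have <- : (e - e^†) ** (e^† ** e) = e - e^†.
    by rewrite mulcBl {1}mulcA e_pi -normal mulcA e_star_pi.
  by rewrite -normal et_eq mulcA mulcBl et t_eq subrr mul0c.
rewrite e_sa in te et_eq tt_eq e_pi.
have e_idem : e ** e = e by rewrite -tt_eq -{2}te mulcA tt_eq e_pi.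
by split=> //; rewrite -?et_eq ?tt_eq.
Qed.

End PartialIsometries.

Lemma cs_jordan_hom_of_sq (R : realType) (A B : cstarAlg R) (S : A -> B) :
  cs_linear S -> (forall a, S (a ** a) = S a ** S a) -> cs_jordan_hom S.
Proof.
move=> [SD SZ] S_sq; split=> [|a b]; first by split.
rewrite /cs_jprod SZ SD; congr (_ *: _).
have := S_sq (a + b); rewrite !(mulcDl, mulcDr, SD) S_sq S_sq -!addrA.
by move/addrI; rewrite !addrA => /addIr.
Qed.

Section StarHomAtUnitary.
Variables (R : realType) (A B : cstarAlg R) (one u : A) (T : A -> B).
Hypotheses (one_unit : cs_unit_of one) (T_lin : cs_linear T) (T_bnd : cs_bounded T).
Hypotheses (u_unitary : cs_unitary one u) (T_hom : cs_star_hom_at T u).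
Local Notation e := (T one).
Local Notation t := (T u).
Local Notation Tc := (star_conj T).

Lemma star_conj_one : Tc one = e^†.
Proof. by rewrite /star_conj (star_unit one_unit). Qed.

Lemma T_inverse_pair_left g h : g ** h = one -> T (u ** g) ** Tc h = t.
Proof.
move=> gh; have [|_ ->] // := T_hom.1 (u ** g) h^†.
by rewrite starcK -mulcA gh (one_unit u).2.
Qed.

Lemma T_inverse_pair_right g h : g ** h = one -> Tc g ** T (h ** u) = t.
Proof.
move=> gh; have [|_ ->] // := T_hom.2 g^† (h ** u).
by rewrite starcK mulcA gh (one_unit u).1.
Qed.

Lemma left_inverse_identities y :
  T (u ** y) ** Tc one = t ** Tc y /\ T (u ** y) ** Tc y = t ** Tc (y ** y).
Proof.
have := inverse_pair_identities one_unit (cs_linear_comp (cs_linear_mull u) T_lin)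
  (cs_linear_star_conj T_lin) (cs_bounded_star_conj T_bnd) T_inverse_pair_left y.
by rewrite /comp (one_unit u).2.
Qed.

Lemma right_inverse_identity y : Tc y ** t = Tc one ** T (y ** u).
Proof.
have [] := inverse_pair_identities one_unit (cs_linear_star_conj T_lin)
  (cs_linear_comp (cs_linear_mulr u) T_lin) (cs_bounded_comp (cs_bounded_mulr u) T_bnd)
  T_inverse_pair_right y.
by rewrite /comp (one_unit u).1.
Qed.

Lemma Tone_Tu_relations :
  [/\ e ** e = e, e^† = e, e ** t = t, t ** t^† = e & t^† ** t = e].
Proof.
have [uu_one uu_one'] := u_unitary.
apply: projection_of_partial_isometries.
- by have := T_inverse_pair_left (one_unit one).1; rewrite (one_unit u).2 star_conj_one.
- by have := T_inverse_pair_right (one_unit one).1; rewrite (one_unit u).1 star_conj_one.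
- by have := (left_inverse_identities u^†).1; rewrite uu_one' star_conj_one star_conjE.
- by have := right_inverse_identity u^†; rewrite uu_one star_conj_one star_conjE.
Qed.

Lemma T_mul_u_Tone y : T (u ** y) ** e = t ** Tc y.
Proof.
have [_ e_sa _ _ _] := Tone_Tu_relations.
by have := (left_inverse_identities y).1; rewrite star_conj_one e_sa.
Qed.

Lemma Tone_commute_star_conj y : e ** Tc y = Tc y ** e.
Proof.
have [e_idem e_sa _ t_tstar tstar_t] := Tone_Tu_relations.
have eTc : e ** Tc y = t^† ** T (u ** y) ** e by rewrite -mulcA T_mul_u_Tone mulcA tstar_t.
have Tce : Tc y ** e = e ** T (y ** u) ** t^†.
  by rewrite -[e in LHS]t_tstar mulcA right_inverse_identity star_conj_one e_sa.
have eTce : e ** Tc y ** e = e ** Tc y by rewrite eTc -mulcA e_idem.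
by rewrite -eTce -mulcA Tce !mulcA e_idem -Tce.
Qed.

Lemma Tone_commute a : e ** T a = T a ** e.
Proof.
have [_ e_sa _ _ _] := Tone_Tu_relations.
have := congr1 (@cs_star R B) (Tone_commute_star_conj a^†).
by rewrite star_conjE !starcM !starcK e_sa => ->.
Qed.

Lemma Tone_star_conj_sq y : e ** Tc (y ** y) = e ** Tc y ** Tc y.
Proof.
have [e_idem e_sa et _ tstar_t] := Tone_Tu_relations.
have tstar_e : t^† ** e = t^† by rewrite -e_sa -starcM et.
have -> : e ** Tc (y ** y) = t^† ** T (u ** y) ** Tc y.
  by rewrite -tstar_t -mulcA -(left_inverse_identities y).2 mulcA.
by rewrite -tstar_e -(mulcA t^†) Tone_commute T_mul_u_Tone mulcA tstar_t.
Qed.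

Lemma Tone_T_sq a : e ** T (a ** a) = e ** T a ** (e ** T a).
Proof.
have [e_idem e_sa _ _ _] := Tone_Tu_relations.
have := congr1 (@cs_star R B) (Tone_star_conj_sq a^†).
rewrite -[a^† ** a^†]starcM !star_conjE !starcM !starcK e_sa => sq.
rewrite Tone_commute sq [e ** T a]Tone_commute -!mulcA (mulcA e) Tone_commute.
by rewrite -mulcA e_idem.
Qed.

End StarHomAtUnitary.

Theorem theorem3p1 (R : realType) (A B : cstarAlg R) (one : A) (T : A -> B) (u : A) :
  cs_unit_of one ->
  cs_linear T -> cs_bounded T ->
  cs_unitary one u -> cs_star_hom_at T u ->
  [/\ cs_projection (T one),
      (forall a : A, cs_mul (T one) (T a) = cs_mul (T a) (T one)),
      cs_jordan_hom (fun a : A => cs_mul (T one) (T a)),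
      ((forall x : A, cs_mul (T one) (T x) = T x) -> cs_jordan_hom T) &
      (forall oneB : B, cs_unit_of oneB -> cs_unitary oneB (T u) ->
         forall x : A, cs_mul (T one) (T x) = T x)].
Proof.
move=> one_unit T_lin T_bnd u_unitary T_hom.
have [e_idem e_sa _ t_tstar _] := Tone_Tu_relations one_unit T_lin T_bnd u_unitary T_hom.
have e_sq := Tone_T_sq one_unit T_lin T_bnd u_unitary T_hom.
split.
- exact: conj e_idem e_sa.
- exact: Tone_commute one_unit T_lin T_bnd u_unitary T_hom.
- apply: cs_jordan_hom_of_sq e_sq.
  exact: cs_linear_comp T_lin (cs_linear_mull _).
- by move=> eT; apply: cs_jordan_hom_of_sq T_lin _ => a; rewrite -eT e_sq !eT.
- by move=> oneB oneB_unit [_ t_tstar_one] x; rewrite -t_tstar t_tstar_one (oneB_unit _).1.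
Qed.
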